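(* Fix a sequence of matchings and any non-negative load vector at the end of round $t_1$, and consider a token $i$ located at node $u=w_i^{(t_1)}$ at the end of round $t_1$. Then for any $t_2 \geq t_1$ and any node $v$, $\Pr[ w_i^{(t_2)} = v ] = \mathbf{M}_{u,v}^{[t_1+1,t_2]}$, and more generally, for any set $D \subseteq V$, $\Pr[ w_i^{(t_2)} \in D ] = \mathbf{M}_{u,D}^{[t_1+1,t_2]}$.
   Context: $G=(V,E)$ has $n$ nodes; a matching $\mathbf{M}^{(t)}\subseteq E$ is identified with the symmetric matrix with entries $1/2$ on $(u,u),(v,v),(u,v),(v,u)$ for $\{u,v\}\in\mathbf{M}^{(t)}$, $1$ on the diagonal for unmatched nodes, $0$ elsewhere; $\mathbf{M}^{[a,b]}=\prod_{s=a}^b\mathbf{M}^{(s)}$ (identity if $a>b$), and $\mathbf{M}_{u,D}=\sum_{v\in D}\mathbf{M}_{u,v}$. Token-based description of the discrete protocol: tokens are distinguishable; $x^{(t)}_u$ is the number of tokens at $u$ at the end of round $t$ and $w^{(t)}_i$ is the node holding token $i$. If $u,v$ are matched in round $t$, all $x^{(t-1)}_u+x^{(t-1)}_v$ tokens at $u$ and $v$ are put in an urn; with probability $1/2$ node $u$ draws $\lceil (x^{(t-1)}_u+x^{(t-1)}_v)/2\rceil$ tokens uniformly at random without replacement, otherwise it draws $\lfloor (x^{(t-1)}_u+x^{(t-1)}_v)/2\rfloor$ tokens (independently over matched edges and rounds); $v$ receives the remaining tokens. Unmatched nodes keep their tokens. *)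

From mathcomp Require Import all_boot all_order all_algebra.
Set Implicit Arguments. Unset Strict Implicit. Unset Printing Implicit Defensive.
Import Order.TTheory GRing.Theory Num.Theory.
Local Open Scope ring_scope.

Definition simple_graph n (G : rel 'I_n) :=
  (forall u v, G u v = G v u) /\ (forall u, ~~ G u u).

(* A matching is encoded by its partner function p: p u = v iff {u,v} is a
   matched edge, and p u = u iff u is unmatched. *)
Definition is_matching n (G : rel 'I_n) (p : {ffun 'I_n -> 'I_n}) :=
  (forall u, p (p u) = u) /\ (forall u, p u != u -> G u (p u)).

Definition match_mx (R : fieldType) n (p : {ffun 'I_n -> 'I_n}) : 'M[R]_n :=
  \matrix_(u, v) (if p u == u then (u == v)%:R
                  else if (v == u) || (v == p u) then 2%:R^-1 else 0).

(* M^{[a, a+k-1]} = M^(a) * M^(a+1) * ... * M^(a+k-1)  (identity if k = 0) *)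
Fixpoint mx_range (R : pzRingType) n (Mf : nat -> 'M[R]_n) (a k : nat) : 'M[R]_n :=
  match k with
  | 0 => 1%:M
  | k'.+1 => mx_range Mf a k' *m Mf (a + k')%N
  end.

Definition mx_set (R : pzRingType) n (A : 'M[R]_n) (u : 'I_n) (D : {set 'I_n}) : R :=
  \sum_(v in D) A u v.

Definition config n m := {ffun 'I_m -> 'I_n}.

(* Probability that the matched edge {u, p u} produces the local outcome
   w -> w': the s tokens on {u, p u} are split so that u receives k of them;
   u draws ceil(s/2) or floor(s/2) tokens with probability 1/2 each, as a
   uniformly random subset of that size (probability 1/'C(s,k) per subset). *)
Definition edge_prob (R : fieldType) n m (p : {ffun 'I_n -> 'I_n})
    (w w' : config n m) (u : 'I_n) : R :=
  let s := #|[set i | (w i == u) || (w i == p u)]| in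
  let k := #|[set i | ((w i == u) || (w i == p u)) && (w' i == u)]| in
  ((k == uphalf s)%:R + (k == s./2)%:R) / 2%:R / ('C(s, k))%:R.

Definition step_kernel (R : fieldType) n m (p : {ffun 'I_n -> 'I_n})
    (w w' : config n m) : R :=
  if [forall i, (w' i == w i) || (w' i == p (w i))]
  then \prod_(u : 'I_n | (val u < val (p u))%N) edge_prob R p w w' u
  else 0.

(* Distribution of the configuration k rounds after round t1, started from
   the configuration w0 at the end of round t1; Ms t is the matching used in
   round t. *)
Fixpoint config_dist (R : fieldType) n m (Ms : nat -> {ffun 'I_n -> 'I_n})
    (t1 k : nat) (w0 : config n m) : {ffun config n m -> R} :=
  match k with
  | 0 => [ffun w => (w == w0)%:R]
  | k'.+1 => let d := config_dist R Ms t1 k' w0 in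
      [ffun w' => \sum_(w : config n m) d w * step_kernel R (Ms (t1 + k'.+1)%N) w w']
  end.

From mathcomp Require Import all_boot all_order all_algebra.
From mathcomp Require Import zify ring lra.
Set Implicit Arguments. Unset Strict Implicit. Unset Printing Implicit Defensive.
Import Order.TTheory GRing.Theory Num.Theory.
Local Open Scope ring_scope.

(* In one round the tokens on a matched edge {u, p u} are split by choosing the
   subset Y of them that ends at u, with a weight depending only on #|Y|, and
   the splits of different edges are independent: reachable configurations
   correspond bijectively to families of such subsets, and the step kernel is
   the product of the edge weights.  Since u draws ceil(s/2) or floor(s/2)
   tokens with equal probability, complementation Y |-> B :\: Y preserves the
   weight, so a fixed token ends at each endpoint of its edge with probability
   1/2.  Hence the position of a single token moves according to the matching
   matrix M^(t), and the claim follows by induction on the number of rounds. *)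

Lemma sumr_mul_indicator (R : pzSemiRingType) (T : finType) (P b : pred T) (F : T -> R) :
  \sum_(x | P x) F x * (b x)%:R = \sum_(x | P x && b x) F x.
Proof.
rewrite big_mkcondr /=; apply: eq_bigr => x _.
by case: (b x); rewrite ?mulr1 ?mulr0.
Qed.

Section SplitWeight.
Variable R : realFieldType.

Lemma uphalf_add_half s : (uphalf s + s./2 = s)%N.
Proof. by rewrite uphalf_half -addnA addnn odd_double_half. Qed.

Definition draw_prob (s a k : nat) : R := (k == a)%:R / ('C(s, a))%:R.

Definition split_weight (s k : nat) : R :=
  ((k == uphalf s)%:R + (k == s./2)%:R) / 2%:R / ('C(s, k))%:R.

Lemma split_weightE s k :
  split_weight s k = (draw_prob s (uphalf s) k + draw_prob s s./2 k) / 2%:R.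
Proof.
rewrite /split_weight /draw_prob mulrAC mulrDl; congr ((_ + _) / _).
  by case: eqP => [->|]; rewrite ?mul0r.
by case: eqP => [->|]; rewrite ?mul0r.
Qed.

Lemma sum_draw_prob (T : finType) (B : {set T}) a : (a <= #|B|)%N ->
  \sum_(Y : {set T} | Y \subset B) draw_prob #|B| a #|Y| = 1.
Proof.
move=> le_aB; rewrite /draw_prob.
under eq_bigr do rewrite mulrC.
rewrite sumr_mul_indicator sumr_const.
have -> : #|[pred Y : {set T} | (Y \subset B) && (#|Y| == a)]| = 'C(#|B|, a).
  by rewrite -cards_draws; apply: eq_card => Y; rewrite inE.
by rewrite -[LHS]mulr_natr mulVf // pnatr_eq0 -lt0n bin_gt0.
Qed.

Lemma sum_split_weight (T : finType) (B : {set T}) :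
  \sum_(Y : {set T} | Y \subset B) split_weight #|B| #|Y| = 1.
Proof.
have := uphalf_add_half #|B| => hB.
under eq_bigr do rewrite split_weightE.
rewrite -big_distrl big_split /= !sum_draw_prob; try lia.
by field.
Qed.

Lemma split_weight_compl s k : (k <= s)%N ->
  split_weight s (s - k) = split_weight s k.
Proof.
move=> le_ks; have := uphalf_add_half s => hs.
rewrite /split_weight bin_sub // addrC; congr ((_%:R + _%:R) / _ / _); apply/eqP/eqP; lia.
Qed.

Lemma sum_split_weight_mem (T : finType) (B : {set T}) i : i \in B ->
  \sum_(Y : {set T} | (Y \subset B) && (i \in Y)) split_weight #|B| #|Y| = 2%:R^-1 /\
  \sum_(Y : {set T} | (Y \subset B) && (i \notin Y)) split_weight #|B| #|Y| = 2%:R^-1.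
Proof.
move=> iB; have := sum_split_weight B.
rewrite (bigID (fun Y : {set T} => i \in Y)) /=.
set In := \sum_(Y | _) _; set Out := \sum_(Y | _) _.
have -> : In = Out.
  rewrite /In (reindex_onto (setD B) (setD B)) /=; last first.
    by move=> Y /andP[/setIidPr sYB _]; rewrite setDDr setDv set0U sYB.
  have idem Y : (B :\: (B :\: Y) == Y) = (Y \subset B).
    by rewrite setDDr setDv set0U; apply/eqP/idP => [<-|/setIidPr //]; apply: subsetIl.
  apply: eq_big => [Y|Y /andP[_]]; first by rewrite subsetDl !inE iB andbT idem andbC.
  rewrite idem => sYB.
  by rewrite cardsD (setIidPr sYB) split_weight_compl // subset_leq_card.
by move=> hOut; split; lra.
Qed.

End SplitWeight.

Section OneRound.
Variables (R : realFieldType) (n m : nat) (p : {ffun 'I_n -> 'I_n}).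
Hypothesis p_invol : involutive p.
Variable w : config n m.

Definition edge_head (u : 'I_n) := (val u < val (p u))%N.
Definition head_of (z : 'I_n) := if edge_head z then z else p z.
Definition edge_tokens (u : 'I_n) := [set j | (w j == u) || (w j == p u)].
Definition edge_split (u : 'I_n) := [pred Y : {set 'I_m} | Y \subset edge_tokens u].
Definition moves_along (w' : config n m) :=
  [forall j, (w' j == w j) || (w' j == p (w j))].

(* A split assigns to every edge head u the set of tokens that end at u. *)
Definition config_of_split (f : {ffun 'I_n -> {set 'I_m}}) : config n m :=
  [ffun j => if j \in f (head_of (w j)) then head_of (w j) else p (head_of (w j))].
Definition split_of_config (w' : config n m) : {ffun 'I_n -> {set 'I_m}} :=
  [ffun u => if edge_head u then [set j | (head_of (w j) == u) && (w' j == u)] else set0].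

Definition split_weight_of (f : {ffun 'I_n -> {set 'I_m}}) : R :=
  \prod_(u | edge_head u) split_weight R #|edge_tokens u| #|f u|.

Lemma edge_head_matched u : edge_head u -> p u != u.
Proof. by rewrite /edge_head => h; apply/eqP => e; rewrite e ltnn in h. Qed.

Lemma head_of_unmatched z : ~~ edge_head (head_of z) -> p z = z.
Proof.
rewrite /head_of /edge_head; case: ifP => [->//|]; rewrite p_invol => h1 h2.
by apply: val_inj; apply/eqP; move: h1 h2; rewrite /edge_head; lia.
Qed.

Lemma head_ofP z :
  (head_of z == z) && (p (head_of z) == p z) || (head_of z == p z) && (p (head_of z) == z).
Proof. by rewrite /head_of; case: ifP => _; rewrite ?p_invol !eqxx ?orbT. Qed.

Lemma head_of_eq z u : edge_head u -> (head_of z == u) = (z == u) || (z == p u).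
Proof.
move=> hu; rewrite /head_of; case: ifP => hz.
  case: (eqVneq z u) => [//|nzu] /=.
  apply/esym/eqP => e; move: hz hu; rewrite /edge_head e p_invol; lia.
case: (eqVneq z u) => [e|nzu] /=; first by move: hz; rewrite e hu.
by apply/eqP/eqP => [<-|->]; rewrite p_invol.
Qed.

Lemma mem_edge_tokens u j : edge_head u -> (j \in edge_tokens u) = (head_of (w j) == u).
Proof. by move=> hu; rewrite inE head_of_eq. Qed.

Lemma moves_along_config_of_split f : moves_along (config_of_split f).
Proof.
apply/forallP => j; rewrite ffunE; have := head_ofP (w j).
by case/orP => /andP[/eqP e1 _]; rewrite e1 ?p_invol; case: ifP; rewrite !eqxx ?orbT.
Qed.

Lemma split_of_config_split w' : split_of_config w' \in pfamily set0 edge_head edge_split.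
Proof.
apply/familyP => u; rewrite ffunE /in_mem /=.
case: ifP => hu //=; apply/subsetP => j.
by rewrite !inE head_of_eq // => /andP[].
Qed.

Section Split.
Variable f : {ffun 'I_n -> {set 'I_m}}.
Hypothesis f_split : f \in pfamily set0 edge_head edge_split.

Lemma split_sub u : edge_head u -> f u \subset edge_tokens u.
Proof. by move: f_split => /familyP /(_ u); rewrite /in_mem /= => + hu; rewrite hu. Qed.

Lemma split_out u : ~~ edge_head u -> f u = set0.
Proof.
by move: f_split => /familyP /(_ u); rewrite /in_mem /= => + hu; rewrite (negbTE hu) => /eqP.
Qed.

Lemma config_of_split_head u j : edge_head u ->
  ((head_of (w j) == u) && (config_of_split f j == u)) = (j \in f u).
Proof.
move=> hu; rewrite ffunE; case: (eqVneq (head_of (w j)) u) => [->|ne] /=.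
  by case: ifP => _; rewrite ?eqxx // (negbTE (edge_head_matched hu)).
apply/esym/negbTE; apply: contra ne => jf.
by rewrite -mem_edge_tokens // (subsetP (split_sub hu)).
Qed.

Lemma config_of_splitK : split_of_config (config_of_split f) = f.
Proof.
apply/ffunP => u; rewrite ffunE; case: ifP => hu; last by rewrite split_out ?hu.
by apply/setP => j; rewrite inE config_of_split_head.
Qed.

Lemma step_kernel_config_of_split :
  step_kernel R p w (config_of_split f) = split_weight_of f.
Proof.
rewrite /step_kernel; have := moves_along_config_of_split f; rewrite /moves_along => ->.
apply: eq_bigr => u hu; rewrite /edge_prob /split_weight.
have -> : #|[set j | ((w j == u) || (w j == p u)) && (config_of_split f j == u)]| = #|f u|.
  by apply: eq_card => j; rewrite inE -head_of_eq // config_of_split_head.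
by [].
Qed.

End Split.

Lemma split_of_configK w' : moves_along w' -> config_of_split (split_of_config w') = w'.
Proof.
move=> /forallP hv; apply/ffunP => j; rewrite !ffunE; have := hv j.
case: (boolP (edge_head (head_of (w j)))) => hE.
  rewrite inE eqxx /=; case: (eqVneq (w' j) (head_of (w j))) => [//|hn] /=.
  have := head_ofP (w j); case/orP => /andP[/eqP e1 /eqP e2]; rewrite e2.
    by rewrite -e1 (negbTE hn) /= => /eqP.
  by move: hn; rewrite e1 => /negbTE ->; rewrite orbF => /eqP.
have hpz := head_of_unmatched hE.
rewrite in_set0 hpz orbb => /eqP ->.
by have := head_ofP (w j); rewrite hpz orbb => /andP[/eqP -> _]; rewrite hpz.
Qed.


Lemma sum_step_kernel (H : config n m -> R) :
  \sum_(w' : config n m) step_kernel R p w w' * H w' =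
  \sum_(f in pfamily set0 edge_head edge_split) split_weight_of f * H (config_of_split f).
Proof.
rewrite (bigID moves_along) /= [X in _ + X]big1 ?addr0; last first.
  by move=> w' hv; rewrite /step_kernel -/(moves_along w') (negbTE hv) mul0r.
rewrite (reindex_onto config_of_split split_of_config) /=; last exact: split_of_configK.
apply: eq_big => f.
  rewrite moves_along_config_of_split /=; apply/eqP/idP => [<-|]; last exact: config_of_splitK.
  exact: split_of_config_split.
move=> /andP[_ /eqP e]; rewrite step_kernel_config_of_split // -e.
exact: split_of_config_split.
Qed.

Lemma sum_split_weight_of :
  \sum_(f in pfamily set0 edge_head edge_split) split_weight_of f = 1.
Proof.
rewrite -(big_distr_big_dep set0 edge_head edge_split
            (fun u Y => split_weight R #|edge_tokens u| #|Y|)).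
by rewrite big1 // => u _; apply: sum_split_weight.
Qed.

Lemma token_marginal_unmatched i v : ~~ edge_head (head_of (w i)) ->
  \sum_(f in pfamily set0 edge_head edge_split)
    split_weight_of f * (config_of_split f i == v)%:R = match_mx R p (w i) v.
Proof.
move=> hE; have pwi := head_of_unmatched hE.
have head_wi : head_of (w i) = w i.
  by have := head_ofP (w i); rewrite pwi orbb => /andP[/eqP -> _].
under eq_bigr do rewrite ffunE head_wi pwi if_same.
by rewrite -big_distrl /= sum_split_weight_of mul1r mxE pwi eqxx.
Qed.

Lemma token_marginal_matched i v : edge_head (head_of (w i)) ->
  \sum_(f in pfamily set0 edge_head edge_split)
    split_weight_of f * (config_of_split f i == v)%:R = match_mx R p (w i) v.
Proof.
set u0 := head_of (w i) => hE.
pose h u (Y : {set 'I_m}) := split_weight R #|edge_tokens u| #|Y| *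
   (if u == u0 then ((if i \in Y then u0 else p u0) == v)%:R else 1).
transitivity (\sum_(f in pfamily set0 edge_head edge_split) \prod_(u | edge_head u) h u (f u)).
  apply: eq_bigr => f _; rewrite /h big_split /= [X in _ = _ * X](bigD1 u0) //= eqxx.
  rewrite [X in _ = _ * (_ * X)]big1 ?mulr1; first by rewrite ffunE.
  by move=> u /andP[_ /negbTE ->].
rewrite -(big_distr_big_dep set0 edge_head edge_split h) (bigD1 u0) //=.
rewrite [X in _ * X]big1 ?mulr1; last first.
  move=> u /andP[_ hu]; rewrite /h (negbTE hu).
  by under eq_bigr do rewrite mulr1; apply: sum_split_weight.
have i_tok : i \in edge_tokens u0 by rewrite mem_edge_tokens // eqxx.
have [sum_in sum_out] := sum_split_weight_mem R i_tok.
have pu0 := edge_head_matched hE.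
have wi_edge : ((v == w i) || (v == p (w i))) = ((v == u0) || (v == p u0)).
  by have := head_ofP (w i); case/orP => /andP[/eqP e1 _]; rewrite /u0 e1 ?p_invol // orbC.
have pwi : (p (w i) == w i) = false.
  apply/negbTE; apply: contra pu0 => /eqP e.
  by rewrite /u0 /head_of; case: ifP => _; rewrite ?e.
rewrite mxE pwi wi_edge /h eqxx.
case: (eqVneq v u0) => [->|nv0] /=.
  rewrite -sum_in -sumr_mul_indicator; apply: eq_bigr => Y _.
  by case: (i \in Y); rewrite ?eqxx // (negbTE pu0).
case: (eqVneq v (p u0)) => [->|nv1] /=.
  rewrite -sum_out -sumr_mul_indicator; apply: eq_bigr => Y _.
  by case: (i \in Y); rewrite ?eqxx // eq_sym (negbTE pu0).
rewrite big1 // => Y _.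
by case: (i \in Y); rewrite eq_sym ?(negbTE nv0) ?(negbTE nv1) mulr0.
Qed.

Lemma step_kernel_token i v :
  \sum_(w' : config n m | w' i == v) step_kernel R p w w' = match_mx R p (w i) v.
Proof.
have -> : \sum_(w' : config n m | w' i == v) step_kernel R p w w' =
           \sum_(w' : config n m) step_kernel R p w w' * (w' i == v)%:R.
  by rewrite sumr_mul_indicator.
rewrite sum_step_kernel.
by case: (boolP (edge_head (head_of (w i)))); [apply: token_marginal_matched | apply: token_marginal_unmatched].
Qed.

End OneRound.

Lemma config_dist_token (R : realFieldType) n m (Ms : nat -> {ffun 'I_n -> 'I_n})
    (t1 k : nat) (w0 : config n m) (i : 'I_m) (v : 'I_n) :
  (forall t, involutive (Ms t)) ->
  \sum_(w : config n m | w i == v) config_dist R Ms t1 k w0 w =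
  mx_range (fun s => match_mx R (Ms s)) t1.+1 k (w0 i) v.
Proof.
move=> Ms_invol; elim: k v => [|k IHk] v /=.
  under eq_bigr do rewrite ffunE.
  rewrite mxE big_mkcond (bigD1 w0) //= eqxx big1 => [|w /negbTE ->]; last by rewrite if_same.
  by case: eqP; rewrite addr0.
transitivity (\sum_(w : config n m) config_dist R Ms t1 k w0 w *
                match_mx R (Ms (t1 + k.+1)%N) (w i) v).
  under eq_bigr do rewrite ffunE.
  rewrite exchange_big /=; apply: eq_bigr => w _.
  by rewrite -big_distrr /= step_kernel_token.
rewrite mxE (partition_big (fun w : config n m => w i) predT) //= addSnnS.
by apply: eq_bigr => u _; rewrite -IHk big_distrl; apply: eq_bigr => w /eqP ->.
Qed.

Theorem lemma3p1 (R : realFieldType) (n m : nat) (G : rel 'I_n)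
    (Ms : nat -> {ffun 'I_n -> 'I_n}) (t1 t2 : nat) (w0 : config n m)
    (i : 'I_m) :
  simple_graph G ->
  (forall t, is_matching G (Ms t)) ->
  (t1 <= t2)%N ->
  let u := w0 i in
  let P := config_dist R Ms t1 (t2 - t1) w0 in
  let MM := mx_range (fun s => match_mx R (Ms s)) t1.+1 (t2 - t1) in
  (forall v : 'I_n, \sum_(w : config n m | w i == v) P w = MM u v) /\
  (forall D : {set 'I_n}, \sum_(w : config n m | w i \in D) P w = mx_set MM u D).
Proof.
move=> _ Ms_matching _ u P MM.
have Ms_invol t : involutive (Ms t) by case: (Ms_matching t).
have token_at v : \sum_(w : config n m | w i == v) P w = MM u v.
  exact: config_dist_token.
split=> // D; rewrite /mx_set (partition_big (fun w : config n m => w i) (mem D)) //=.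
by apply: eq_bigr => v vD; rewrite -token_at; apply: eq_bigl => w; case: eqVneq => [->|]; rewrite ?vD ?andbF.
Qed.
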